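(* Let $\Pi$ be a derivation in system $\mathcal L$ of $\Gamma\vdash M$. Then for every sequent $\Gamma'\vdash M'$ occurring in $\Pi$, we have $\Gamma'\cup\{M'\}\subseteq St(\Gamma\cup\{M\})$.
   Context: Fix names, variables and constructors $\mathsf{pub}$ (unary), $\mathsf{sign},\mathsf{blind},\langle\cdot,\cdot\rangle,\{\cdot\}_\cdot$ (binary). $E$ is an equational theory with signature $\Sigma_E$ disjoint from the constructors, with at most one associative-commutative (AC) binary symbol $\oplus$, presented by a rewrite system $R_E$ terminating and confluent modulo AC. Terms are ground terms over names, the constructors and $\Sigma_E$. $\equiv$ is equality modulo AC, $\approx_E$ equality modulo $E$. Guarded term: a name, a variable, or headed by a constructor. $E$-context: term with holes built only from symbols of $\Sigma_E$. Sequents $\Gamma\vdash M$ have all terms in normal form; $\Gamma,M$ means $\Gamma\cup\{M\}$. $\Gamma\Vdash_{\mathcal R}M$ means $\Gamma\vdash M$ is derivable using only: (id) $\Gamma\vdash M$ if $M\approx_E C[M_1,\dots,M_k]$ for an $E$-context $C$ and $M_i\in\Gamma$; and the right rules: from $\Gamma\vdash M$ and $\Gamma\vdash N$ infer $\Gamma\vdash\langle M,N\rangle$; from $\Gamma\vdash M$ and $\Gamma\vdash K$ infer $\Gamma\vdash\{M\}_K$, resp. $\Gamma\vdash\mathsf{sign}(M,K)$, resp. $\Gamma\vdash\mathsf{blind}(M,K)$. System $\mathcal L$: ($r$) $\Gamma\vdash M$ with no premise if $\Gamma\Vdash_{\mathcal R}M$; ($lp$) from $\Gamma,\langle M,N\rangle,M,N\vdash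 T$ infer $\Gamma,\langle M,N\rangle\vdash T$; ($le$) from $\Gamma,\{M\}_K,M,K\vdash N$ infer $\Gamma,\{M\}_K\vdash N$ if $\Gamma,\{M\}_K\Vdash_{\mathcal R}K$; ($\mathsf{sign}$) from $\Gamma,\mathsf{sign}(M,K),\mathsf{pub}(L),M\vdash N$ infer $\Gamma,\mathsf{sign}(M,K),\mathsf{pub}(L)\vdash N$ if $K\equiv L$; ($\mathsf{blind}_1$) from $\Gamma,\mathsf{blind}(M,K),M,K\vdash N$ infer $\Gamma,\mathsf{blind}(M,K)\vdash N$ if $\Gamma,\mathsf{blind}(M,K)\Vdash_{\mathcal R}K$; ($\mathsf{blind}_2$) from $\Gamma,\mathsf{sign}(\mathsf{blind}(M,R),K),\mathsf{sign}(M,K),R\vdash N$ infer $\Gamma,\mathsf{sign}(\mathsf{blind}(M,R),K)\vdash N$ if $\Gamma,\mathsf{sign}(\mathsf{blind}(M,R),K)\Vdash_{\mathcal R}R$; ($ls$) from $\Gamma,A\vdash M$ infer $\Gamma\vdash M$ if $A$ is a guarded subterm of a term in $\Gamma\cup\{M\}$ and $\Gamma\Vdash_{\mathcal R}A$. For a set of terms $\Delta$: $pst(\Delta)$ is the set of proper subterms of terms in $\Delta$ ($N$ is a proper subterm of $P$ if it is a subterm with $N\neq P$); $sst(\Delta)=\{\mathsf{sign}(M,N)\mid M,N\in pst(\Delta)\}$; $St(\Delta)=\Delta\cup pst(\Delta)\cup sst(\Delta)$. *)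

From Stdlib Require Import List Relations.
Import ListNotations.
Set Implicit Arguments.

Section Terms.
Variable F : Type.

(* Names, variables, constructors pub, sign, blind, <.,.>, {.}_. , and
   applications of Sigma_E symbols.  Enc M K stands for {M}_K. *)
Inductive term : Type :=
| Name : nat -> term
| Var : nat -> term
| Pub : term -> term
| Sign : term -> term -> term
| Blind : term -> term -> term
| Pair : term -> term -> term
| Enc : term -> term -> term
| App : F -> list term -> term.

Inductive subterm : term -> term -> Prop :=
| st_refl t : subterm t t
| st_pub s t : subterm s t -> subterm s (Pub t)
| st_sign1 s t u : subterm s t -> subterm s (Sign t u)
| st_sign2 s t u : subterm s u -> subterm s (Sign t u)
| st_blind1 s t u : subterm s t -> subterm s (Blind t u)
| st_blind2 s t u : subterm s u -> subterm s (Blind t u)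
| st_pair1 s t u : subterm s t -> subterm s (Pair t u)
| st_pair2 s t u : subterm s u -> subterm s (Pair t u)
| st_enc1 s t u : subterm s t -> subterm s (Enc t u)
| st_enc2 s t u : subterm s u -> subterm s (Enc t u)
| st_app s f l t : In t l -> subterm s t -> subterm s (App f l).

Fixpoint subst (sigma : nat -> term) (t : term) : term :=
  match t with
  | Name n => Name n
  | Var x => sigma x
  | Pub t => Pub (subst sigma t)
  | Sign t u => Sign (subst sigma t) (subst sigma u)
  | Blind t u => Blind (subst sigma t) (subst sigma u)
  | Pair t u => Pair (subst sigma t) (subst sigma u)
  | Enc t u => Enc (subst sigma t) (subst sigma u)
  | App f l => App f (map (subst sigma) l)
  end.

Definition ground (t : term) : Prop := forall x, ~ subterm (Var x) t.

Definition arity_ok (arity : F -> nat) (t : term) : Prop :=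
  forall f l, subterm (App f l) t -> length l = arity f.

Definition is_term (arity : F -> nat) (t : term) : Prop :=
  ground t /\ arity_ok arity t.

Definition sigmaE_term (t : term) : Prop :=
  forall s, subterm s t -> (exists x, s = Var x) \/ (exists f l, s = App f l).

Definition guarded (t : term) : Prop :=
  match t with
  | App _ _ => False
  | _ => True
  end.

Inductive ctx_clos (r : relation term) : relation term :=
| cc_root s t : r s t -> ctx_clos r s t
| cc_pub s t : ctx_clos r s t -> ctx_clos r (Pub s) (Pub t)
| cc_sign1 s t u : ctx_clos r s t -> ctx_clos r (Sign s u) (Sign t u)
| cc_sign2 s t u : ctx_clos r s t -> ctx_clos r (Sign u s) (Sign u t)
| cc_blind1 s t u : ctx_clos r s t -> ctx_clos r (Blind s u) (Blind t u)
| cc_blind2 s t u : ctx_clos r s t -> ctx_clos r (Blind u s) (Blind u t)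
| cc_pair1 s t u : ctx_clos r s t -> ctx_clos r (Pair s u) (Pair t u)
| cc_pair2 s t u : ctx_clos r s t -> ctx_clos r (Pair u s) (Pair u t)
| cc_enc1 s t u : ctx_clos r s t -> ctx_clos r (Enc s u) (Enc t u)
| cc_enc2 s t u : ctx_clos r s t -> ctx_clos r (Enc u s) (Enc u t)
| cc_app f l1 l2 s t :
    ctx_clos r s t -> ctx_clos r (App f (l1 ++ s :: l2)) (App f (l1 ++ t :: l2)).

Definition ac_root (ac : option F) (s t : term) : Prop :=
  exists f, ac = Some f /\
   ((exists x y z, s = App f [App f [x; y]; z] /\ t = App f [x; App f [y; z]])
    \/ (exists x y, s = App f [x; y] /\ t = App f [y; x])).

Definition ACeq (ac : option F) : relation term :=
  clos_refl_sym_trans term (ctx_clos (ac_root ac)).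

Definition rule_root (rules : list (term * term)) (s t : term) : Prop :=
  exists l r sigma, In (l, r) rules /\ s = subst sigma l /\ t = subst sigma r.

Definition rstep (rules : list (term * term)) : relation term :=
  ctx_clos (rule_root rules).

Definition rstepAC (ac : option F) (rules : list (term * term)) (s t : term) : Prop :=
  exists s' t', ACeq ac s s' /\ rstep rules s' t' /\ ACeq ac t' t.

Definition Eeq (ac : option F) (rules : list (term * term)) : relation term :=
  clos_refl_sym_trans term (union term (rstep rules) (ctx_clos (ac_root ac))).

Definition nf (ac : option F) (rules : list (term * term)) (t : term) : Prop :=
  forall u, ~ rstepAC ac rules t u.

End Terms.

Arguments Name {F}.
Arguments Var {F}.

Record eqtheory (F : Type) := {
  arity : F -> nat;
  ac : option F;
  ac_binary : forall f, ac = Some f -> arity f = 2;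
  rules : list (term F * term F);
  rules_sig : forall l r, In (l, r) rules ->
     sigmaE_term l /\ sigmaE_term r /\ arity_ok arity l /\ arity_ok arity r;
  rules_lhs : forall l r, In (l, r) rules -> forall x, l <> Var x;
  rules_vars : forall l r, In (l, r) rules ->
     forall x, subterm (Var x) r -> subterm (Var x) l;
  terminating : well_founded (fun t s => rstepAC ac rules s t);
  confluent_modAC : forall s t, Eeq ac rules s t ->
     exists u v, clos_refl_trans _ (rstepAC ac rules) s u /\
                 clos_refl_trans _ (rstepAC ac rules) t v /\ ACeq ac u v
}.

Arguments arity {F}.
Arguments ac {F}.
Arguments rules {F}.

Section Systems.
Variable F : Type.
Variable E : eqtheory F.

Definition ctx := term F -> Prop.
Definition add (G : ctx) (t : term F) : ctx := fun u => G u \/ u = t.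

Definition nfE := nf (ac E) (rules E).
Definition EeqE := Eeq (ac E) (rules E).

Definition seq_ok (G : ctx) (M : term F) : Prop :=
  (forall t, G t -> is_term (arity E) t /\ nfE t) /\ is_term (arity E) M /\ nfE M.

Inductive Rder (G : ctx) : term F -> Prop :=
| R_id M : nfE M ->
    (exists (C : term F) (sigma : nat -> term F), sigmaE_term C /\
        (forall x, subterm (Var x) C -> G (sigma x)) /\ EeqE M (subst sigma C)) ->
    Rder G M
| R_pair M N : nfE (Pair M N) -> Rder G M -> Rder G N -> Rder G (Pair M N)
| R_enc M K : nfE (Enc M K) -> Rder G M -> Rder G K -> Rder G (Enc M K)
| R_sign M K : nfE (Sign M K) -> Rder G M -> Rder G K -> Rder G (Sign M K)
| R_blind M K : nfE (Blind M K) -> Rder G M -> Rder G K -> Rder G (Blind M K).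

(* Derivations in system L.  A conclusion "G, t |- N" is written with a
   context G containing t; the premise context then is G plus the new terms. *)
Inductive Lder : ctx -> term F -> Type :=
| L_r G M : seq_ok G M -> Rder G M -> Lder G M
| L_lp G M N T : seq_ok G T -> G (Pair M N) ->
    Lder (add (add G M) N) T -> Lder G T
| L_le G M K N : seq_ok G N -> G (Enc M K) -> Rder G K ->
    Lder (add (add G M) K) N -> Lder G N
| L_sign G M K L N : seq_ok G N -> G (Sign M K) -> G (Pub L) -> ACeq (ac E) K L ->
    Lder (add G M) N -> Lder G N
| L_blind1 G M K N : seq_ok G N -> G (Blind M K) -> Rder G K ->
    Lder (add (add G M) K) N -> Lder G N
| L_blind2 G M R K N : seq_ok G N -> G (Sign (Blind M R) K) -> Rder G R ->
    Lder (add (add G (Sign M K)) R) N -> Lder G N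
| L_ls G A M : seq_ok G M -> guarded A ->
    (exists P, (G P \/ P = M) /\ subterm A P) -> Rder G A ->
    Lder (add G A) M -> Lder G M.

Fixpoint occurs G M (d : Lder G M) (G' : ctx) (M' : term F) : Prop :=
  (G' = G /\ M' = M) \/
  match d with
  | @L_r _ _ _ _ => False
  | @L_lp _ _ _ _ _ _ d' => occurs d' G' M'
  | @L_le _ _ _ _ _ _ _ d' => occurs d' G' M'
  | @L_sign _ _ _ _ _ _ _ _ _ d' => occurs d' G' M'
  | @L_blind1 _ _ _ _ _ _ _ d' => occurs d' G' M'
  | @L_blind2 _ _ _ _ _ _ _ _ d' => occurs d' G' M'
  | @L_ls _ _ _ _ _ _ _ d' => occurs d' G' M'
  end.

Definition pst (D : ctx) (N : term F) : Prop :=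
  exists P, D P /\ subterm N P /\ N <> P.
Definition sst (D : ctx) (t : term F) : Prop :=
  exists M N, t = Sign M N /\ pst D M /\ pst D N.
Definition St (D : ctx) (t : term F) : Prop := D t \/ pst D t \/ sst D t.

End Systems.

(* Every rule of L only adds to the left-hand side terms that are subterms of
   terms already present, except blind_2, which adds sign(M, K) for some
   sign(blind(M, R), K) on the left; there M and K are proper subterms, so
   sign(M, K) lies in sst.  Hence St(Gamma, M), being closed under subterms,
   is an invariant of the sequents of a derivation, read from the root up. *)
From Stdlib Require Import List Lia.
Set Implicit Arguments.
Unset Strict Implicit.

Section SubtermClosure.
Variable F : Type.
Implicit Types (s t A P : term F) (D G : ctx F).

Fixpoint tsize t : nat :=
  match t with
  | Name _ | Var _ => 1
  | Pub a => S (tsize a)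
  | Sign a b | Blind a b | Pair a b | Enc a b => S (tsize a + tsize b)
  | App _ l => S (list_sum (map tsize l))
  end.

Lemma tsize_In t l : In t l -> tsize t <= list_sum (map tsize l).
Proof.
  induction l as [|u l IHl]; simpl; [tauto|].
  intros [<-|Ht]; [lia|]. specialize (IHl Ht). lia.
Qed.

Lemma subterm_eq_or_smaller s t : subterm s t -> s = t \/ tsize s < tsize t.
Proof.
  induction 1 as [| | | | | | | | | |s f l t Hin _ IH]; simpl; auto;
    try (right; destruct IHsubterm as [->|]; lia).
  right. pose proof (tsize_In Hin). destruct IH as [->|]; lia.
Qed.

Lemma subterm_trans s t u : subterm s t -> subterm t u -> subterm s u.
Proof. intros Hst Htu; induction Htu; eauto using subterm. Qed.

Lemma pst_subterm D P A : pst D P -> subterm A P -> pst D A.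
Proof.
  intros [Q [HQ [HPQ HneqPQ]]] HAP.
  exists Q; split; [exact HQ|split; [eapply subterm_trans; eauto|]].
  intros ->.
  destruct (subterm_eq_or_smaller HPQ) as [->|HltPA]; [congruence|].
  destruct (subterm_eq_or_smaller HAP) as [->|]; lia.
Qed.

Lemma St_proper_subterm D P A :
  St D P -> subterm A P -> tsize A < tsize P -> pst D A.
Proof.
  intros [HP|[HP|[X [Y [-> [HX HY]]]]]] HAP Hlt.
  - exists P; repeat split; auto. intros ->; lia.
  - eapply pst_subterm; eauto.
  - inversion HAP; subst; simpl in Hlt;
      [lia|apply (pst_subterm HX)|apply (pst_subterm HY)]; assumption.
Qed.

Lemma St_subterm D P A : St D P -> subterm A P -> St D A.
Proof.
  intros HP HAP. destruct (subterm_eq_or_smaller HAP) as [->|Hlt]; auto.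
  right; left. eapply St_proper_subterm; eauto.
Qed.

Lemma St_unblind_sign D M R K :
  St D (Sign (Blind M R) K) -> St D (Sign M K).
Proof.
  intros HS. right; right. exists M, K; split; [reflexivity|].
  split; eapply St_proper_subterm; eauto using subterm; simpl; lia.
Qed.

Lemma St_add D G a :
  (forall t, G t -> St D t) -> St D a -> forall t, add G a t -> St D t.
Proof. intros HG Ha t [Ht| ->]; auto. Qed.

End SubtermClosure.

Lemma occurs_St (F : Type) (E : eqtheory F) (G : ctx F) (M : term F)
  (Pi : Lder E G M) (D : ctx F) :
  (forall t, G t -> St D t) -> St D M ->
  forall G' M', occurs Pi G' M' -> (forall t, G' t -> St D t) /\ St D M'.
Proof.
  induction Pi; intros HG HM G' M' Hocc; simpl in Hocc;
    (destruct Hocc as [[-> ->]|Hocc]; [split; auto|]);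
    try contradiction; apply IHPi; auto.
  all: repeat apply St_add; auto.
  all: eauto 6 using St_subterm, St_unblind_sign, subterm.
  match goal with Hex : exists P, _ /\ subterm A P |- _ => destruct Hex as [P [HP HAP]] end.
  apply (St_subterm (P := P)); auto.
  destruct HP as [HP| ->]; auto.
Qed.

Theorem lemma5 (F : Type) (E : eqtheory F) (G : ctx F) (M : term F)
  (Pi : Lder E G M) (G' : ctx F) (M' : term F) :
  occurs Pi G' M' ->
  (forall t, G' t -> St (add G M) t) /\ St (add G M) M'.
Proof.
  apply occurs_St.
  - intros t Ht. left; left; exact Ht.
  - left; right; reflexivity.
Qed.
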